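(* For every integer $t$, \begin{align*} \sum_{n=1}^\infty(-1)^{n-1}\binom{2n}{n}\frac{O_n}{8^n}L_{n+t}&=\frac{\sqrt2}{2\sqrt{\alpha+2}}\left(\bigl(\alpha^{t+1}-L_{t-1}\bigr)\ln\Bigl(\frac{\sqrt5}{2}\Bigr)+\bigl(\alpha^{t-2}+L_{t-1}\bigr)\ln\alpha\right),\\ \sum_{n=1}^\infty(-1)^{n-1}\binom{2n}{n}\frac{O_n}{8^n}F_{n+t}&=\frac{\sqrt{10}}{10\sqrt{\alpha+2}}\left(\bigl(\alpha^{t-2}+L_{t-1}\bigr)\ln\Bigl(\frac{\sqrt5}{2}\Bigr)+\bigl(\alpha^{t+1}-L_{t-1}\bigr)\ln\alpha\right), \end{align*} and, more generally, for every gibonacci sequence $G_j=G_j(a,b)$, \begin{align*} \sum_{n=1}^\infty(-1)^{n-1}\binom{2n}{n}\frac{O_n}{8^n}G_{n+t}&=\frac{\sqrt{10}}{10\sqrt{\alpha+2}}\Bigl(\bigl(\alpha^{t-3}(b\alpha+a)+G_t+G_{t-2}\bigr)\ln\Bigl(\frac{\sqrt5}{2}\Bigr)\\ &\qquad+\bigl(\alpha^t(b\alpha+a)-G_t-G_{t-2}\bigr)\ln\alpha\Bigr). \end{align*}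
   Context: $O_n=\sum_{j=1}^n\frac1{2j-1}$. $F_n$ and $L_n$ are the Fibonacci and Lucas numbers ($F_0=0,F_1=1$, $L_0=2,L_1=1$, $u_n=u_{n-1}+u_{n-2}$), extended to all integers by the recurrence. $\alpha=(1+\sqrt5)/2$, $\beta=-1/\alpha$. For numbers $a,b$ not both zero, the gibonacci sequence $G_j=G_j(a,b)$ is defined by $G_0=a$, $G_1=b$, $G_j=G_{j-1}+G_{j-2}$, extended to negative indices by $G_{-j}=G_{-(j-2)}-G_{-(j-1)}$; equivalently $G_j=\frac{(b-a\beta)\alpha^j+(a\alpha-b)\beta^j}{\alpha-\beta}$. *)

From Stdlib Require Import Reals Lra Lia ZArith.
From Coquelicot Require Import Coquelicot.
Open Scope R_scope.

Fixpoint Odd_harm (n : nat) : R :=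
  match n with
  | O => 0
  | S m => Odd_harm m + / (2 * INR (S m) - 1)
  end.

(* forward values: returns (G_n, G_{n+1}) *)
Fixpoint gib_fwd (a b : R) (n : nat) : R * R :=
  match n with
  | O => (a, b)
  | S m => let p := gib_fwd a b m in (snd p, fst p + snd p)
  end.

(* backward values: returns (G_{-n}, G_{-n+1}) using G_{-j} = G_{-(j-2)} - G_{-(j-1)} *)
Fixpoint gib_bwd (a b : R) (n : nat) : R * R :=
  match n with
  | O => (a, b)
  | S m => let p := gib_bwd a b m in (snd p - fst p, fst p)
  end.

Definition gib (a b : R) (j : Z) : R :=
  if (0 <=? j)%Z then fst (gib_fwd a b (Z.to_nat j))
  else fst (gib_bwd a b (Z.to_nat (- j))).

Definition Fib (j : Z) : R := gib 0 1 j.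
Definition Luc (j : Z) : R := gib 2 1 j.

Definition alpha : R := (1 + sqrt 5) / 2.

Definition coef (n : nat) : R :=
  (-1) ^ (n - 1) * Binomial.C (2 * n) n * Odd_harm n / 8 ^ n.

From Stdlib Require Import Reals Lra Lia ZArith.
From Coquelicot Require Import Coquelicot.
Open Scope R_scope.

(* The power series f(x) = sum C(2n,n) x^n and g(x) = sum C(2n,n) O_n x^n
   satisfy (1 - 4x) f' = 2 f and (1 - 4x) g' = 2 g + 2 f on |x| < 1/4, whence
   f(x) = 1/sqrt(1-4x) and g(x) = -ln(1-4x) / (2 sqrt(1-4x)).  Putting
   x = -y/8 gives sum_{n>=1} (-1)^(n-1) C(2n,n) O_n y^n / 8^n
   = ln(1+y/2) / (2 sqrt(1+y/2)) for |y| < 2.  By Binet's formula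
   G_(n+t) = P alpha^(n+t) + Q beta^(n+t) with |alpha|, |beta| < 2, so the series
   is P alpha^t S(alpha) + Q beta^t S(beta) for that closed form S.  Finally
   1 + alpha/2 = (sqrt 5/2) alpha and 1 + beta/2 = (sqrt 5/2) / alpha split the
   logarithms into ln(sqrt 5/2) +- ln alpha, and what is left is algebra in Q(sqrt 5). *)

Lemma CV_radius_le_abs (a b : nat -> R) :
  (forall n, Rabs (a n) <= Rabs (b n)) -> Rbar_le (CV_radius b) (CV_radius a).
Proof.
  intro Hab.
  apply (is_lub_Rbar_subset
    (fun r => exists M, forall n, Rabs (a n * r ^ n) <= M)
    (fun r => exists M, forall n, Rabs (b n * r ^ n) <= M));
    [| apply CV_radius_bounded ..].
  intros r [M HM]; exists M; intro n.
  eapply Rle_trans; [| apply (HM n)].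
  rewrite !Rabs_mult; apply Rmult_le_compat_r; [apply Rabs_pos | apply Hab].
Qed.

Lemma PS_incr_1_derive (a : nat -> R) n : PS_incr_1 (PS_derive a) n = INR n * a n.
Proof. destruct n; [simpl; unfold zero; simpl; ring | reflexivity]. Qed.

Lemma PSeries_derive_mul_1_minus (a : nat -> R) (k x : R) :
  ex_pseries (PS_derive a) x ->
  (1 - k * x) * PSeries (PS_derive a) x
  = PSeries (fun n => INR (S n) * a (S n) - k * (INR n * a n)) x.
Proof.
  intro Ha.
  transitivity (PSeries (PS_minus (PS_derive a) (PS_scal k (PS_incr_1 (PS_derive a)))) x).
  - rewrite PSeries_minus, PSeries_scal, PSeries_incr_1; [ring | exact Ha |].
    apply ex_pseries_scal; [apply Rmult_comm | now apply ex_pseries_incr_1].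
  - apply PSeries_ext; intro n.
    unfold PS_minus, PS_scal, PS_opp, PS_plus.
    rewrite PS_incr_1_derive. reflexivity.
Qed.

Lemma is_derive_zero_eq (f : R -> R) (r x : R) :
  Rabs x < r -> (forall t, Rabs t < r -> is_derive f t 0) -> f x = f 0.
Proof.
  intros Hx Hf.
  assert (Hseg : forall u v, Rabs u < r -> Rabs v < r -> u < v -> f u = f v).
  { intros u v Hu Hv Huv. apply eq_is_derive; [| exact Huv].
    intros w Hw. apply Hf. apply Rabs_def1; apply Rabs_def2 in Hu, Hv; lra. }
  assert (H0 : Rabs 0 < r) by (rewrite Rabs_R0; pose proof (Rabs_pos x); lra).
  destruct (Rtotal_order x 0) as [Hlt | [-> | Hgt]]; auto.
  symmetry; auto.
Qed.

Lemma is_derive_sqrt_1_minus_4x_mul (f : R -> R) (x df h : R) :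
  0 < 1 - 4 * x -> is_derive f x df -> (1 - 4 * x) * df = 2 * f x + h ->
  is_derive (fun t => sqrt (1 - 4 * t) * f t) x (h / sqrt (1 - 4 * x)).
Proof.
  intros Hpos Hf Hode.
  assert (Hs : is_derive (fun t => sqrt (1 - 4 * t)) x (-4 / (2 * sqrt (1 - 4 * x)))).
  { apply (is_derive_sqrt (fun t => 1 - 4 * t)); [auto_derive; auto; ring | exact Hpos]. }
  replace (h / sqrt (1 - 4 * x))
    with (-4 / (2 * sqrt (1 - 4 * x)) * f x + sqrt (1 - 4 * x) * df).
  - exact (is_derive_mult _ _ _ _ _ Hs Hf Rmult_comm).
  - pose proof (sqrt_lt_R0 _ Hpos).
    pose proof (sqrt_sqrt _ (Rlt_le _ _ Hpos)) as Hsq.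
    replace h with ((1 - 4 * x) * df - 2 * f x) by lra.
    set (s := sqrt (1 - 4 * x)) in *. rewrite <- Hsq. field. lra.
Qed.

Definition central_binom (n : nat) : R := Binomial.C (2 * n) n.

Definition central_binom_harm (n : nat) : R := central_binom n * Odd_harm n.

Lemma central_binom_0 : central_binom 0 = 1.
Proof. unfold central_binom, Binomial.C; simpl; field. Qed.

Lemma central_binom_S n :
  INR (S n) * central_binom (S n) = 2 * (2 * INR n + 1) * central_binom n.
Proof.
  unfold central_binom, Binomial.C.
  replace (2 * S n - S n)%nat with (S n) by lia.
  replace (2 * n - n)%nat with n by lia.
  replace (2 * S n)%nat with (S (S (2 * n))) by lia.
  rewrite !fact_simpl, !mult_INR, !S_INR, mult_INR.
  pose proof (INR_fact_neq_0 n); pose proof (INR_fact_neq_0 (2 * n)); pose proof (pos_INR n).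
  simpl INR; field; lra.
Qed.

Lemma central_binom_pos n : 0 < central_binom n.
Proof.
  induction n as [| n IH]; [rewrite central_binom_0; lra |].
  pose proof (central_binom_S n); pose proof (pos_INR n); rewrite S_INR in *.
  nra.
Qed.

Lemma central_binom_le_pow4 n : central_binom n <= 4 ^ n.
Proof.
  induction n as [| n IH]; [rewrite central_binom_0; simpl; lra |].
  pose proof (central_binom_S n); pose proof (central_binom_pos (S n)); pose proof (pos_INR n).
  rewrite S_INR in *; simpl.
  nra.
Qed.

Lemma Odd_harm_S n : Odd_harm (S n) = Odd_harm n + / (2 * INR n + 1).
Proof.
  change (Odd_harm (S n)) with (Odd_harm n + / (2 * INR (S n) - 1)).
  rewrite S_INR; do 2 f_equal; ring.
Qed.

Lemma Odd_harm_bounds n : 0 <= Odd_harm n <= INR n.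
Proof.
  induction n as [| n IH]; [simpl; lra |].
  rewrite Odd_harm_S, S_INR; pose proof (pos_INR n).
  assert (0 < / (2 * INR n + 1) <= 1).
  { split; [apply Rinv_0_lt_compat; lra |].
    rewrite <- Rinv_1; apply Rinv_le_contravar; lra. }
  lra.
Qed.

Lemma CV_radius_central_binom : Rbar_le (/ 4) (CV_radius central_binom).
Proof.
  apply CV_radius_bounded; exists 1; intro n.
  rewrite pow_inv, Rabs_pos_eq.
  - pose proof (central_binom_le_pow4 n); pose proof (pow_lt 4 n).
    apply Rmult_le_reg_r with (4 ^ n); [lra |].
    field_simplify; lra.
  - pose proof (central_binom_pos n).
    apply Rmult_le_pos; [lra | apply Rlt_le, Rinv_0_lt_compat, pow_lt; lra].
Qed.

Lemma CV_radius_central_binom_harm : Rbar_le (/ 4) (CV_radius central_binom_harm).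
Proof.
  eapply Rbar_le_trans; [apply CV_radius_central_binom |].
  rewrite <- CV_radius_derive, <- CV_radius_incr_1.
  apply CV_radius_le_abs; intro n.
  rewrite PS_incr_1_derive; unfold central_binom_harm.
  pose proof (Odd_harm_bounds n); pose proof (central_binom_pos n); pose proof (pos_INR n).
  rewrite !Rabs_pos_eq by nra.
  rewrite Rmult_comm; apply Rmult_le_compat_r; lra.
Qed.

Lemma central_binom_ode x : Rabs x < / 4 ->
  (1 - 4 * x) * PSeries (PS_derive central_binom) x = 2 * PSeries central_binom x.
Proof.
  intro Hx.
  rewrite PSeries_derive_mul_1_minus, <- PSeries_scal.
  - apply PSeries_ext; intro n.
    change (PS_scal 2 central_binom n) with (2 * central_binom n).
    rewrite central_binom_S; ring.
  - exact (ex_pseries_derive _ _ (Rbar_lt_le_trans (Rabs x) (/ 4) _ Hx CV_radius_central_binom)).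
Qed.

Lemma central_binom_harm_ode x : Rabs x < / 4 ->
  (1 - 4 * x) * PSeries (PS_derive central_binom_harm) x
  = 2 * PSeries central_binom_harm x + 2 * PSeries central_binom x.
Proof.
  intro Hx.
  assert (Hc := Rbar_lt_le_trans (Rabs x) (/ 4) _ Hx CV_radius_central_binom).
  assert (Hh := Rbar_lt_le_trans (Rabs x) (/ 4) _ Hx CV_radius_central_binom_harm).
  rewrite PSeries_derive_mul_1_minus by now apply ex_pseries_derive.
  rewrite <- !PSeries_scal, <- PSeries_plus
    by (apply ex_pseries_scal; [apply Rmult_comm | now apply CV_radius_inside]).
  apply PSeries_ext; intro n.
  change (PS_plus (PS_scal 2 central_binom_harm) (PS_scal 2 central_binom) n)
    with (2 * central_binom_harm n + 2 * central_binom n).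
  unfold central_binom_harm; rewrite Odd_harm_S, <- (Rmult_assoc (INR (S n))).
  rewrite central_binom_S; pose proof (pos_INR n).
  field; lra.
Qed.

Lemma PSeries_central_binom x : Rabs x < / 4 ->
  PSeries central_binom x = / sqrt (1 - 4 * x).
Proof.
  intro Hx.
  assert (Hpos : forall t, Rabs t < / 4 -> 0 < 1 - 4 * t)
    by (intros t Ht; apply Rabs_def2 in Ht; lra).
  assert (Hconst : sqrt (1 - 4 * x) * PSeries central_binom x = 1).
  { rewrite (is_derive_zero_eq (fun t => sqrt (1 - 4 * t) * PSeries central_binom t) (/ 4) x Hx).
    - rewrite PSeries_0, central_binom_0, Rmult_0_r, Rminus_0_r, sqrt_1; ring.
    - intros t Ht. rewrite <- (Rdiv_0_l (sqrt (1 - 4 * t))).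
      apply is_derive_sqrt_1_minus_4x_mul with (df := PSeries (PS_derive central_binom) t).
      + now apply Hpos.
      + exact (is_derive_PSeries _ _ (Rbar_lt_le_trans (Rabs t) (/ 4) _ Ht CV_radius_central_binom)).
      + rewrite central_binom_ode by exact Ht; ring. }
  pose proof (sqrt_lt_R0 _ (Hpos x Hx)).
  apply Rmult_eq_reg_l with (sqrt (1 - 4 * x)); [rewrite Hconst; field |]; lra.
Qed.

Lemma is_derive_central_binom_harm_invariant t : Rabs t < / 4 ->
  is_derive (fun u => sqrt (1 - 4 * u) * PSeries central_binom_harm u + / 2 * ln (1 - 4 * u)) t 0.
Proof.
  intro Ht.
  assert (Hpos : 0 < 1 - 4 * t) by (apply Rabs_def2 in Ht; lra).
  pose proof (sqrt_lt_R0 _ Hpos).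
  pose proof (sqrt_sqrt _ (Rlt_le _ _ Hpos)) as Hsq.
  assert (Hprod : is_derive (fun u => sqrt (1 - 4 * u) * PSeries central_binom_harm u) t
                    (2 * PSeries central_binom t / sqrt (1 - 4 * t))).
  { apply is_derive_sqrt_1_minus_4x_mul with (df := PSeries (PS_derive central_binom_harm) t).
    - exact Hpos.
    - exact (is_derive_PSeries _ _ (Rbar_lt_le_trans (Rabs t) (/ 4) _ Ht CV_radius_central_binom_harm)).
    - now rewrite central_binom_harm_ode. }
  assert (Hln : is_derive (fun u => / 2 * ln (1 - 4 * u)) t (-2 / (1 - 4 * t)))
    by (auto_derive; [lra | field; lra]).
  replace 0 with (2 * PSeries central_binom t / sqrt (1 - 4 * t) + -2 / (1 - 4 * t)).
  - exact (is_derive_plus _ _ _ _ _ Hprod Hln).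
  - rewrite PSeries_central_binom by exact Ht.
    set (s := sqrt (1 - 4 * t)) in *. rewrite <- Hsq. field. lra.
Qed.

Lemma PSeries_central_binom_harm x : Rabs x < / 4 ->
  PSeries central_binom_harm x = - ln (1 - 4 * x) / (2 * sqrt (1 - 4 * x)).
Proof.
  intro Hx.
  assert (Hpos : 0 < 1 - 4 * x) by (apply Rabs_def2 in Hx; lra).
  assert (Hconst : sqrt (1 - 4 * x) * PSeries central_binom_harm x + / 2 * ln (1 - 4 * x) = 0).
  { rewrite (is_derive_zero_eq _ (/ 4) x Hx is_derive_central_binom_harm_invariant).
    rewrite PSeries_0, Rmult_0_r, Rminus_0_r, sqrt_1, ln_1.
    unfold central_binom_harm; simpl; ring. }
  pose proof (sqrt_lt_R0 _ Hpos).
  apply Rmult_eq_reg_l with (sqrt (1 - 4 * x)); [| lra].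
  replace (sqrt (1 - 4 * x) * PSeries central_binom_harm x) with (- (/ 2 * ln (1 - 4 * x))) by lra.
  field; lra.
Qed.

Definition coef_gf (y : R) : R := ln (1 + y / 2) / (2 * sqrt (1 + y / 2)).

Lemma is_series_coef_pow y : Rabs y < 2 ->
  is_series (fun k => coef (S k) * y ^ S k) (coef_gf y).
Proof.
  intro Hy.
  set (x := -1 * y * / 8).
  assert (Hx : Rabs x < / 4)
    by (unfold x; rewrite !Rabs_mult, Rabs_m1, Rabs_inv, (Rabs_pos_eq 8) by lra; lra).
  assert (Htail : is_series (fun k => central_binom_harm (S k) * x ^ S k)
                    (PSeries central_binom_harm x)).
  { apply (is_series_incr_1 (fun k => central_binom_harm k * x ^ k)).
    replace (plus _ _) with (PSeries central_binom_harm x)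
      by (unfold plus, central_binom_harm; simpl; ring).
    apply is_pseries_R, PSeries_correct, CV_radius_inside.
    exact (Rbar_lt_le_trans (Rabs x) (/ 4) _ Hx CV_radius_central_binom_harm). }
  apply is_series_opp in Htail.
  rewrite PSeries_central_binom_harm in Htail by exact Hx.
  replace (coef_gf y) with (opp (- ln (1 - 4 * x) / (2 * sqrt (1 - 4 * x)))).
  - eapply is_series_ext; [| exact Htail]; intro k.
    change (- (central_binom_harm (S k) * x ^ S k) = coef (S k) * y ^ S k).
    unfold coef, central_binom_harm, central_binom, x.
    replace (S k - 1)%nat with k by lia.
    rewrite !Rpow_mult_distr, pow_inv, <- !tech_pow_Rmult.
    pose proof (pow_lt 8 k ltac:(lra)).
    field; lra.
  - unfold coef_gf, opp, x; simpl.
    replace (1 - 4 * (-1 * y * / 8)) with (1 + y / 2) by field.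
    unfold Rdiv; ring.
Qed.

Definition beta : R := 1 - alpha.

Lemma sqrt5_sqr : sqrt 5 * sqrt 5 = 5.
Proof. apply sqrt_sqrt; lra. Qed.

Lemma sqrt5_bounds : 2 < sqrt 5 < 3.
Proof. pose proof sqrt5_sqr; pose proof (sqrt_lt_R0 5 ltac:(lra)); split; nra. Qed.

Lemma sqrt5_pow_SS n : sqrt 5 ^ S (S n) = 5 * sqrt 5 ^ n.
Proof. simpl; rewrite <- Rmult_assoc, sqrt5_sqr; reflexivity. Qed.

Lemma alpha_sqr : alpha * alpha = alpha + 1.
Proof. pose proof sqrt5_sqr; unfold alpha; nra. Qed.

Lemma beta_sqr : beta * beta = beta + 1.
Proof. pose proof alpha_sqr; unfold beta; nra. Qed.

Lemma pow_SS_of_sqr x n : x * x = x + 1 -> x ^ S (S n) = x ^ S n + x ^ n.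
Proof. intro Hx; simpl; rewrite <- Rmult_assoc, Hx; ring. Qed.

Lemma alpha_mul_beta : alpha * beta = -1.
Proof. pose proof alpha_sqr; unfold beta; nra. Qed.

Lemma alpha_bounds : 1 < alpha < 2.
Proof. pose proof sqrt5_bounds; unfold alpha; lra. Qed.

Lemma alpha_neq_0 : alpha <> 0.
Proof. pose proof alpha_bounds; lra. Qed.

Lemma beta_neq_0 : beta <> 0.
Proof. pose proof alpha_mul_beta as Hab; intro H0; rewrite H0 in Hab; lra. Qed.

Lemma Rinv_alpha : / alpha = - beta.
Proof. pose proof alpha_mul_beta; field_simplify_eq; [lra | exact alpha_neq_0]. Qed.

Lemma Rinv_beta : / beta = - alpha.
Proof. pose proof alpha_mul_beta; field_simplify_eq; [lra | exact beta_neq_0]. Qed.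

Section Binet.

Variables a b P Q : R.
Hypothesis Ha : a = P + Q.
Hypothesis Hb : b = P * alpha + Q * beta.

Lemma gib_fwd_binet n :
  gib_fwd a b n = (P * alpha ^ n + Q * beta ^ n, P * alpha ^ S n + Q * beta ^ S n).
Proof.
  induction n as [| n IH]; [simpl; rewrite Ha, Hb; f_equal; ring |].
  cbn [gib_fwd]; rewrite IH; cbn [fst snd]; f_equal.
  rewrite (pow_SS_of_sqr alpha), (pow_SS_of_sqr beta) by (apply alpha_sqr || apply beta_sqr).
  ring.
Qed.

Lemma gib_bwd_binet n :
  gib_bwd a b n = (P * (- beta) ^ n + Q * (- alpha) ^ n,
                   P * (- beta) ^ n * alpha + Q * (- alpha) ^ n * beta).
Proof.
  induction n as [| n IH]; [simpl; rewrite Ha, Hb; f_equal; ring |].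
  cbn [gib_bwd]; rewrite IH; cbn [fst snd pow]; f_equal.
  - unfold beta; ring.
  - transitivity (- (alpha * beta) * (P * (- beta) ^ n + Q * (- alpha) ^ n));
      [rewrite alpha_mul_beta |]; ring.
Qed.

Lemma gib_binet j : gib a b j = P * powerRZ alpha j + Q * powerRZ beta j.
Proof.
  unfold gib; destruct j as [| p | p]; simpl.
  - rewrite Ha; ring.
  - rewrite gib_fwd_binet; reflexivity.
  - rewrite gib_bwd_binet; simpl.
    rewrite <- !pow_inv, Rinv_alpha, Rinv_beta; reflexivity.
Qed.

End Binet.

Lemma Luc_binet j : Luc j = powerRZ alpha j + powerRZ beta j.
Proof. unfold Luc; rewrite (gib_binet 2 1 1 1); [ring | ring | unfold beta; ring]. Qed.

Lemma is_series_coef_binet a b P Q t : a = P + Q -> b = P * alpha + Q * beta ->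
  is_series (fun k => coef (S k) * gib a b (Z.of_nat (S k) + t))
    (P * powerRZ alpha t * coef_gf alpha + Q * powerRZ beta t * coef_gf beta).
Proof.
  intros Ha Hb.
  pose proof alpha_bounds.
  assert (Hal := is_series_coef_pow alpha ltac:(rewrite Rabs_pos_eq; lra)).
  assert (Hbe := is_series_coef_pow beta ltac:(unfold beta; rewrite Rabs_left; lra)).
  apply (is_series_scal (P * powerRZ alpha t)) in Hal.
  apply (is_series_scal (Q * powerRZ beta t)) in Hbe.
  eapply is_series_ext; [| exact (is_series_plus _ _ _ _ Hal Hbe)]; intro k.
  change (P * powerRZ alpha t * (coef (S k) * alpha ^ S k)
          + Q * powerRZ beta t * (coef (S k) * beta ^ S k)
          = coef (S k) * gib a b (Z.of_nat (S k) + t)).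
  rewrite (gib_binet a b P Q Ha Hb), !powerRZ_add, <- !pow_powerRZ
    by (apply alpha_neq_0 || apply beta_neq_0).
  ring.
Qed.

Lemma sqrt_alpha_2_pos : 0 < sqrt (alpha + 2).
Proof. pose proof alpha_bounds; apply sqrt_lt_R0; lra. Qed.

Lemma coef_gf_alpha :
  coef_gf alpha = sqrt 2 / (2 * sqrt (alpha + 2)) * (ln (sqrt 5 / 2) + ln alpha).
Proof.
  pose proof sqrt5_bounds; pose proof sqrt5_sqr; pose proof alpha_bounds.
  pose proof sqrt_alpha_2_pos; pose proof (sqrt_lt_R0 2 ltac:(lra)).
  unfold coef_gf.
  replace (1 + alpha / 2) with (sqrt 5 / 2 * alpha) at 1 by (unfold alpha; nra).
  replace (1 + alpha / 2) with ((alpha + 2) / 2) by field.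
  rewrite ln_mult, sqrt_div by lra.
  field; lra.
Qed.

Lemma coef_gf_beta :
  coef_gf beta = sqrt 2 / (2 * sqrt (alpha + 2)) * alpha * (ln (sqrt 5 / 2) - ln alpha).
Proof.
  pose proof sqrt5_bounds; pose proof sqrt5_sqr; pose proof alpha_bounds; pose proof alpha_sqr.
  pose proof sqrt_alpha_2_pos; pose proof (sqrt_lt_R0 2 ltac:(lra)).
  unfold coef_gf.
  replace (1 + beta / 2) with (sqrt 5 / 2 / alpha) at 1
    by (unfold beta; field_simplify_eq; [unfold alpha; nra | lra]).
  replace (1 + beta / 2) with ((alpha + 2) / (2 * (alpha * alpha)))
    by (unfold beta; field_simplify_eq; [nra | lra]).
  rewrite ln_div, sqrt_div, sqrt_mult, sqrt_square by nra.
  field; lra.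
Qed.

Lemma sqrt10_eq : sqrt 10 = sqrt 2 * sqrt 5.
Proof. rewrite <- sqrt_mult by lra; f_equal; ring. Qed.

(* With alpha = (1 + sqrt 5)/2 substituted, the goal is an identity in Q(sqrt 5):
   clear denominators, then reduce powers of sqrt 5 using sqrt 5 ^ 2 = 5. *)
Ltac golden_field :=
  rewrite <- ?Z.add_opp_r, ?powerRZ_add by (apply alpha_neq_0 || apply beta_neq_0);
  simpl powerRZ;
  pose proof sqrt_alpha_2_pos; pose proof sqrt5_bounds;
  set (A := powerRZ alpha _) in *; set (B := powerRZ beta _) in *;
  set (Lp := ln (sqrt 5 / 2)) in *; set (La := ln alpha) in *;
  set (K := sqrt (alpha + 2)) in *;
  unfold beta, alpha;
  field_simplify_eq; [repeat rewrite sqrt5_pow_SS; ring | repeat split; intro; lra].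

Lemma is_series_coef_gib a b t :
  is_series (fun k : nat => coef (S k) * gib a b (Z.of_nat (S k) + t))
    (sqrt 10 / (10 * sqrt (alpha + 2)) *
     ((powerRZ alpha (t - 3) * (b * alpha + a) + gib a b t + gib a b (t - 2))
        * ln (sqrt 5 / 2)
      + (powerRZ alpha t * (b * alpha + a) - gib a b t - gib a b (t - 2))
        * ln alpha)).
Proof.
  pose proof sqrt5_bounds.
  set (P := (b - a * beta) / sqrt 5); set (Q := (a * alpha - b) / sqrt 5).
  assert (Ha : a = P + Q) by (unfold P, Q, beta, alpha; field; lra).
  assert (Hb : b = P * alpha + Q * beta) by (unfold P, Q, beta, alpha; field; lra).
  replace (sqrt 10 / _ * _)
    with (P * powerRZ alpha t * coef_gf alpha + Q * powerRZ beta t * coef_gf beta).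
  - now apply is_series_coef_binet.
  - rewrite coef_gf_alpha, coef_gf_beta, !(gib_binet a b P Q Ha Hb), sqrt10_eq.
    unfold P, Q.
    golden_field.
Qed.

Lemma is_series_coef_Luc t :
  is_series (fun k : nat => coef (S k) * Luc (Z.of_nat (S k) + t))
    (sqrt 2 / (2 * sqrt (alpha + 2)) *
     ((powerRZ alpha (t + 1) - Luc (t - 1)) * ln (sqrt 5 / 2)
      + (powerRZ alpha (t - 2) + Luc (t - 1)) * ln alpha)).
Proof.
  replace (sqrt 2 / _ * _)
    with (1 * powerRZ alpha t * coef_gf alpha + 1 * powerRZ beta t * coef_gf beta).
  - apply is_series_coef_binet; [ring | unfold beta; ring].
  - rewrite coef_gf_alpha, coef_gf_beta, Luc_binet.
    golden_field.
Qed.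

Lemma is_series_coef_Fib t :
  is_series (fun k : nat => coef (S k) * Fib (Z.of_nat (S k) + t))
    (sqrt 10 / (10 * sqrt (alpha + 2)) *
     ((powerRZ alpha (t - 2) + Luc (t - 1)) * ln (sqrt 5 / 2)
      + (powerRZ alpha (t + 1) - Luc (t - 1)) * ln alpha)).
Proof.
  pose proof sqrt5_bounds.
  replace (sqrt 10 / _ * _) with
    (/ sqrt 5 * powerRZ alpha t * coef_gf alpha + - / sqrt 5 * powerRZ beta t * coef_gf beta).
  - apply is_series_coef_binet; [ring | unfold beta, alpha; field; lra].
  - rewrite coef_gf_alpha, coef_gf_beta, Luc_binet, sqrt10_eq.
    golden_field.
Qed.

Theorem theorem13 :
  (forall t : Z,
     is_series (fun k : nat => coef (S k) * Luc (Z.of_nat (S k) + t))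
       (sqrt 2 / (2 * sqrt (alpha + 2)) *
        ((powerRZ alpha (t + 1) - Luc (t - 1)) * ln (sqrt 5 / 2)
         + (powerRZ alpha (t - 2) + Luc (t - 1)) * ln alpha))) /\
  (forall t : Z,
     is_series (fun k : nat => coef (S k) * Fib (Z.of_nat (S k) + t))
       (sqrt 10 / (10 * sqrt (alpha + 2)) *
        ((powerRZ alpha (t - 2) + Luc (t - 1)) * ln (sqrt 5 / 2)
         + (powerRZ alpha (t + 1) - Luc (t - 1)) * ln alpha))) /\
  (forall (a b : R) (t : Z), ~ (a = 0 /\ b = 0) ->
     is_series (fun k : nat => coef (S k) * gib a b (Z.of_nat (S k) + t))
       (sqrt 10 / (10 * sqrt (alpha + 2)) *
        ((powerRZ alpha (t - 3) * (b * alpha + a) + gib a b t + gib a b (t - 2))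
           * ln (sqrt 5 / 2)
         + (powerRZ alpha t * (b * alpha + a) - gib a b t - gib a b (t - 2))
           * ln alpha))).
Proof.
  split; [exact is_series_coef_Luc |].
  split; [exact is_series_coef_Fib |].
  intros a b t _; apply is_series_coef_gib.
Qed.
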